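(* In the Simon urn described in the context, with fixed trigger probability $p\in(0,1)$, for every color index $c\ge2$ and every time $n\ge2$, $$\Pr(K_{n,c}=0)=\binom{n-2}{c-2}p^{c-2}(1-p)^{n-c+1}+\sum_{r=1}^{c-2}\binom{n-2}{r-1}p^{r-1}(1-p)^{n-r-1},$$ with the convention that $\binom{m}{k}=0$ when $k>m$ or $k<0$.
   Context: Simon urn. The urn is empty at time $0$. Let $B_0=1$ and let $(B_n)_{n\ge1}$ be i.i.d. Bernoulli random variables with $\Pr(B_n=1)=p\in(0,1)$, independent of everything else. Colors are labelled $1,2,\dots$ in order of first appearance. At each time $n\ge1$: if $B_{n-1}=1$, one ball of a new color (not yet present) is added to the urn and this color is registered; if $B_{n-1}=0$, a ball is drawn uniformly at random from the urn, its color is registered, and one additional ball of that color is added. Thus the urn contains $n$ balls at time $n$. $K_{n,c}$ denotes the number of times color $c$ has been registered up to and including time $n$ (equal to the number of balls of color $c$ in the urn at time $n$), and $K_{n,c}=0$ if color $c$ has not yet appeared. *)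

(* The Simon urn is encoded as a discrete-time Markov chain on
   states (s, b): s = sequence of the colors of the balls in the urn (in order
   of addition), b = the trigger bit B_n to be used at the next step.
   Expectations of functions of the state at time n are computed exactly by
   iterating the transition operator (backward equation). *)
From mathcomp Require Import all_boot all_order all_algebra.
Set Implicit Arguments. Unset Strict Implicit. Unset Printing Implicit Defensive.
Import Order.TTheory GRing.Theory Num.Theory.
Local Open Scope ring_scope.

Section SimonUrn.
Variable R : realFieldType.
Variable p : R.

(* label of a new color: colors are labelled 1,2,... in order of first appearance *)
Definition new_color (s : seq nat) : nat := (size (undup s)).+1.

(* Transition operator: (urn_step g) (s, b) = E[ g(state at next time) | current state (s,b) ]. *)
Definition urn_step (g : seq nat -> bool -> R) (s : seq nat) (b : bool) : R :=
  let add x := p * g (rcons s x) true + (1 - p) * g (rcons s x) false in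
  if b then add (new_color s)
  else (size s)%:R^-1 * \sum_(j < size s) add (nth 0%N s j).

Fixpoint urn_expect (n : nat) (g : seq nat -> bool -> R) : R :=
  match n with
  | 0 => g [::] true
  | n'.+1 => urn_expect n' (urn_step g)
  end.

Definition K (s : seq nat) (c : nat) : nat := count_mem c s.

Definition prob_K_zero (n c : nat) : R :=
  urn_expect n (fun s _ => if K s c == 0%N then 1 else 0).

End SimonUrn.

From mathcomp Require Import all_boot all_order all_algebra.
From mathcomp Require Import ring zify.
Set Implicit Arguments. Unset Strict Implicit. Unset Printing Implicit Defensive.
Import Order.TTheory GRing.Theory Num.Theory.
Local Open Scope ring_scope.

(* Since colors are labelled in order of first appearance, the colors present
   at time n are exactly 1, ..., D_n, where D_n is the number of distinct
   colors; hence K_{n,c} = 0 iff D_n < c.  The pair (D_n, B_n) is itself a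
   Markov chain: D_{n+1} = D_n + B_n with B_{n+1} a fresh Bernoulli(p) bit.
   Thus D_n - 1 = B_1 + ... + B_{n-1} is Bin(n-1, p), and conditioning on
   B_{n-1} gives Pr(D_n < c) = Pr(Bin(n-2, p) < c-2) + (1-p) Pr(Bin(n-2, p) = c-2),
   which is the stated formula. *)

Definition ncolors (s : seq nat) : nat := size (undup s).

Definition consecutive_colors (s : seq nat) : Prop :=
  forall x, (x \in s) = (0 < x <= ncolors s)%N.

Lemma eq_ncolors (s1 s2 : seq nat) : s1 =i s2 -> ncolors s1 = ncolors s2.
Proof. by move=> eq_s; apply/perm_size/perm_undup. Qed.

Lemma ncolors_rcons_mem (s : seq nat) x :
  x \in s -> ncolors (rcons s x) = ncolors s.
Proof.
move=> xs; apply: eq_ncolors => y.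
by rewrite mem_rcons in_cons; case: eqP => // ->.
Qed.

Lemma consecutive_colors_rcons_mem (s : seq nat) x :
  consecutive_colors s -> x \in s -> consecutive_colors (rcons s x).
Proof.
move=> cs xs y; rewrite ncolors_rcons_mem // -cs mem_rcons in_cons.
by case: eqP => // ->.
Qed.

Lemma new_color_notin (s : seq nat) :
  consecutive_colors s -> new_color s \notin s.
Proof. by move=> cs; rewrite cs /new_color /ncolors ltnn andbF. Qed.

Lemma ncolors_rcons_new (s : seq nat) :
  consecutive_colors s -> ncolors (rcons s (new_color s)) = (ncolors s).+1.
Proof.
move=> cs; rewrite (eq_ncolors (s2 := new_color s :: s)); last exact: mem_rcons.
by rewrite /ncolors /= (negbTE (new_color_notin cs)).
Qed.

Lemma consecutive_colors_rcons_new (s : seq nat) :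
  consecutive_colors s -> consecutive_colors (rcons s (new_color s)).
Proof.
move=> cs y; rewrite (ncolors_rcons_new cs) // mem_rcons in_cons cs /new_color.
rewrite -/(ncolors s); lia.
Qed.

Lemma K_eq0_consecutive (s : seq nat) c :
  (0 < c)%N -> consecutive_colors s -> (K s c == 0%N) = (ncolors s < c)%N.
Proof.
move=> c_gt0 cs; rewrite /K.
have -> : (count_mem c s == 0%N) = (c \notin s) by apply/eqP/idP => /count_memPn.
by rewrite cs c_gt0 -ltnNge.
Qed.

Section ColorCountChain.
Variable R : realFieldType.
Variable p : R.

Definition ncolors_step (h : nat -> bool -> R) (d : nat) (b : bool) : R :=
  p * h (d + b)%N true + (1 - p) * h (d + b)%N false.

(* The second conjunct rules out drawing from an empty urn, where [urn_step]
   would divide by [0]. *)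
Definition urn_reachable (s : seq nat) (b : bool) : Prop :=
  consecutive_colors s /\ (b || (0 < size s)%N).

Lemma urn_reachable_rcons_mem s b x b' :
  urn_reachable s b -> x \in s -> urn_reachable (rcons s x) b'.
Proof.
move=> [cs _] xs; split; first exact: consecutive_colors_rcons_mem.
by rewrite size_rcons orbT.
Qed.

Lemma urn_reachable_rcons_new s b b' :
  urn_reachable s b -> urn_reachable (rcons s (new_color s)) b'.
Proof.
move=> [cs _]; split; first exact: consecutive_colors_rcons_new.
by rewrite size_rcons orbT.
Qed.

Lemma urn_step_ncolors (g : seq nat -> bool -> R) (h : nat -> bool -> R) :
  (forall s b, urn_reachable s b -> g s b = h (ncolors s) b) ->
  forall s b, urn_reachable s b ->
    urn_step p g s b = ncolors_step h (ncolors s) b.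
Proof.
move=> gh s [] reach_s; rewrite /urn_step /ncolors_step.
  have [cs _] := reach_s.
  rewrite !gh ?(ncolors_rcons_new cs) ?addn1 //;
    exact: urn_reachable_rcons_new reach_s.
have [_ /= s_gt0] := reach_s.
have draw_j (j : 'I_(size s)) : p * g (rcons s (nth 0%N s j)) true
    + (1 - p) * g (rcons s (nth 0%N s j)) false = ncolors_step h (ncolors s) false.
  have js : nth 0%N s j \in s by rewrite mem_nth.
  rewrite /ncolors_step !gh ?(ncolors_rcons_mem js) ?addn0 //;
    exact: urn_reachable_rcons_mem reach_s js.
rewrite (eq_bigr _ (fun j _ => draw_j j)) sumr_const card_ord.
by rewrite -[X in _ * X]mulr_natl mulrA mulVf ?mul1r // pnatr_eq0 -lt0n.
Qed.

Lemma iter_urn_step_ncolors n (g : seq nat -> bool -> R) (h : nat -> bool -> R) :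
  (forall s b, urn_reachable s b -> g s b = h (ncolors s) b) ->
  forall s b, urn_reachable s b ->
    iter n (urn_step p) g s b = iter n ncolors_step h (ncolors s) b.
Proof.
move=> gh; elim: n => [|n IHn] /=; first exact: gh.
exact: urn_step_ncolors.
Qed.

Lemma urn_expect_iter n (g : seq nat -> bool -> R) :
  urn_expect p n g = iter n (urn_step p) g [::] true.
Proof. by elim: n g => [|n IHn] g //=; rewrite IHn -iterSr. Qed.

Definition binom_cdf (m t : nat) : R :=
  \sum_(k < t) 'C(m, k)%:R * p ^+ k * (1 - p) ^+ (m - k).

Lemma binom_cdf0 t : binom_cdf 0 t = (0 < t)%:R.
Proof.
case: t => [|t]; first by rewrite /binom_cdf big_ord0.
rewrite /binom_cdf big_ord_recl big1 ?addr0 => [|i _]; first by rewrite !mulr1.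
by rewrite bin0n !mul0r.
Qed.

Lemma binom_cdfSr m t :
  binom_cdf m t.+1 = binom_cdf m t + 'C(m, t)%:R * p ^+ t * (1 - p) ^+ (m - t).
Proof. by rewrite /binom_cdf big_ord_recr. Qed.

Lemma binom_cdfS m t :
  binom_cdf m.+1 t = p * binom_cdf m t.-1 + (1 - p) * binom_cdf m t.
Proof.
rewrite /binom_cdf; case: t => [|t]; first by rewrite !big_ord0 !mulr0 addr0.
rewrite !big_ord_recl /= !bin0 !expr0 !mul1r !subn0 mulrDr addrCA -exprS.
congr (_ + _); rewrite !mulr_sumr -big_split /=; apply: eq_bigr => i _.
rewrite /bump /= !add1n binS natrD !mulrDl addrC; congr (_ + _); last first.
  by rewrite subSS [p ^+ _.+1]exprS; ring.
have [i_lt_m | m_le_i] := ltnP i m.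
  by rewrite subSS (_ : (m - i = (m - i.+1).+1)%N) ?exprS; [ring | lia].
by rewrite bin_small // !mul0r !mulr0 addr0.
Qed.

Lemma iter_ncolors_step_lt c n d b :
  iter n.+1 ncolors_step (fun d _ => (d < c)%:R) d b = binom_cdf n (c - (d + b)).
Proof.
elim: n d b => [|n IHn] d b.
  by rewrite binom_cdf0 /= /ncolors_step -mulrDl subrKC mul1r subn_gt0.
by rewrite iterS {1}/ncolors_step !IHn binom_cdfS addn0 addn1 subnS.
Qed.

End ColorCountChain.

Theorem lemma4p1 (R : realFieldType) (p : R) (hp0 : 0 < p) (hp1 : p < 1)
  (c n : nat) (hc : (2 <= c)%N) (hn : (2 <= n)%N) :
  prob_K_zero p n c =
    ('C(n - 2, c - 2))%:R * p ^+ (c - 2) * (1 - p) ^+ (n.+1 - c)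
    + \sum_(1 <= r < c.-1) ('C(n - 2, r - 1))%:R * p ^+ (r - 1) * (1 - p) ^+ (n - r - 1).
Proof.
(* The identity is polynomial in p. *)
case: n hn => [|[|m]] // _; case: c hc => [|[|c]] // _.
have reach0 : urn_reachable [::] true by split=> // -[].
rewrite /prob_K_zero urn_expect_iter.
rewrite (@iter_urn_step_ncolors R p _ _ (fun d _ => (d < c.+2)%:R)) //; last first.
  by move=> s b [cs _]; rewrite K_eq0_consecutive //; case: (_ < _)%N.
rewrite iter_ncolors_step_lt binom_cdfS binom_cdfSr /= !subSS !subn0.
have -> : \sum_(1 <= r < c.+1)
      'C(m, r - 1)%:R * p ^+ (r - 1) * (1 - p) ^+ (m.+2 - r - 1) = binom_cdf p m c.
  rewrite big_add1 big_mkord; apply: eq_bigr => r _.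
  by rewrite subn1 /= (_ : (m.+2 - r.+1 - 1 = m - r)%N) //; lia.
have [c_le_m | m_lt_c] := leqP c m; last by rewrite bin_small //; ring.
by rewrite (_ : (m.+1 - c = (m - c).+1)%N) ?exprS; [ring | lia].
Qed.
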